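(* Let $A$ be a finite set of atoms, and let $t,s$ be nominal terms of the same sort and $\nabla$ a freshness context, all based on $A$. If $\{X:t\triangleq s\};\emptyset;\emptyset;\varepsilon\Longrightarrow^{+}\emptyset;S;\Gamma;\sigma$ is a derivation of the algorithm $\mathfrak N$ (with parameters $A$ and $\nabla$, $X$ a fresh variable), then $\langle\Gamma,X\sigma\rangle$ is an $A$-based generalization of $\langle\nabla,t\rangle$ and $\langle\nabla,s\rangle$.
   Context: Nominal terms $t::=f(t_1,\dots,t_n)\mid a\mid a.t\mid \pi\cdot X$ over sorted atoms, variables and function symbols; $\pi$ is a permutation (finite sequence of swappings $(a\,b)$ of same-sorted atoms; $\mathit{Id}$ the empty one, $\pi^{-1}$ the reversed sequence); $\pi\bullet t$ is the swapping action ($(a\,b)$ exchanges $a,b$ everywhere, $(a\,b)\bullet(\pi\cdot X)=((a\,b)\pi)\cdot X$, sequences act right to left); a permutation denotes a bijection on atoms. $\mathrm{Atoms}(\cdot)$ is the set of atoms occurring. Substitutions map variables to terms of the same sort, application $t\sigma$ allows atom capture and $(\pi\cdot X)\sigma=\pi\bullet(X\sigma)$; $\sigma\vartheta$ is composition (first $\sigma$), $\varepsilon$ the identity. A freshness context is a finite set of constraints $a\# X$. Judgments: $\nabla\vdash a\approx a$; $\nabla\vdash a.t\approx a.t'$ if $\nabla\vdash t\approx t'$; $\nabla\vdash a.t\approx a'.t'$ if $a\neq a'$, $\nabla\vdash t\approx(a\,a')\bullet t'$ and $\nabla\vdash a\# t'$; $\nabla\vdash\pi\cdot X\approx\pi'\cdot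 X$ if $a\# X\in\nabla$ for all $a$ with $\pi\bullet a\neq\pi'\bullet a$; applications componentwise; $\nabla\vdash a\# a'$ if $a\ne a'$; $\nabla\vdash a\#\pi\cdot X$ if $\pi^{-1}\bullet a\# X\in\nabla$; $a\#$ distributes over applications; $\nabla\vdash a\# a.t$; $\nabla\vdash a\# a'.t$ if $a\ne a'$ and $\nabla\vdash a\# t$. ${\sf FC}(F)$ for a finite set $F$ of formulas $a\# t$: starting from $F;\emptyset$ apply as long as possible $\{a\# b\}\uplus F';\Delta\Rightarrow F';\Delta$ ($a\neq b$); $\{a\# a.t\}\uplus F';\Delta\Rightarrow F';\Delta$; $\{a\# b.t\}\uplus F';\Delta\Rightarrow\{a\# t\}\cup F';\Delta$ ($a\neq b$); $\{a\# f(t_1,..,t_n)\}\uplus F';\Delta\Rightarrow\{a\# t_1,..,a\# t_n\}\cup F';\Delta$; $\{a\#\pi\cdot X\}\uplus F';\Delta\Rightarrow F';\{\pi^{-1}\bullet a\# X\}\cup\Delta$; result $\Delta$ if the terminal state is $\emptyset;\Delta$, $\bot$ if it contains some $a\# a$. $\nabla\sigma:={\sf FC}(\{a\# X\sigma\mid a\# X\in\nabla\})$. $\sigma$ respects $\nabla$ if for each $X$ no $a$ with $a\# X\in\nabla$ occurs free in $X\sigma$ outside suspensions. A term-in-context is $\langle\nabla,t\rangle$; $\langle\nabla_1,t_1\rangle\preceq\langle\nabla_2,t_2\rangle$ iff some $\sigma$ respecting $\nabla_1$ has $\nabla_1\sigma\subseteq\nabla_2$ and $\nabla_2\vdash t_1\sigma\approx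 t_2$. A generalization of $p_1,p_2$ is $p$ with $p\preceq p_1$, $p\preceq p_2$. A term/freshness context is $A$-based if all its atoms lie in $A$; a term-in-context is $A$-based if both components are; an $A$-based generalization is a generalization that is $A$-based. Algorithm $\mathfrak N$ (parameters: finite atom set $A$, $A$-based freshness context $\nabla$). An AUT is $X:t\triangleq s$ ($X$ a generalization variable of the sort of $t,s$). States are $P;S;\Gamma;\sigma$ with $P,S$ sets of AUTs (each generalization variable occurring only once in $P\cup S$), $\Gamma$ a freshness context, $\sigma$ a substitution. Rules: Dec: $\{X:h(t_1,..,t_m)\triangleq h(s_1,..,s_m)\}\uplus P;S;\Gamma;\sigma\Rightarrow\{Y_1:t_1\triangleq s_1,..,Y_m:t_m\triangleq s_m\}\cup P;S;\Gamma;\sigma\{X\mapsto h(Y_1,..,Y_m)\}$, $h$ a function symbol or an atom ($m\ge0$), $Y_i$ fresh. Abs: $\{X:a.t\triangleq b.s\}\uplus P;S;\Gamma;\sigma\Rightarrow\{Y:(c\,a)\bullet t\triangleq(c\,b)\bullet s\}\cup P;S;\Gamma;\sigma\{X\mapsto c.Y\}$, $Y$ fresh, $c\in A$ with $\nabla\vdash c\# a.t$ and $\nabla\vdash c\# b.s$. Sol: $\{X:t\triangleq s\}\uplus P;S;\Gamma;\sigma\Rightarrow P;S\cup\{X:t\triangleq s\};\Gamma\cup\Gamma';\sigma$ where $\Gamma'=\{a\# X\mid a\in A,\nabla\vdash a\# t,\nabla\vdash a\# s\}$, applicable only when Dec and Abs do not apply to this AUT, i.e. (a) $t,s$ have distinct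 heads (head of $f(\dots)$ is $f$, of $a$ is $a$, of an abstraction is the abstraction symbol, of $\pi\cdot X$ is $X$), or (b) both are suspensions, or (c) both are abstractions $a.t',b.s'$ with no $c\in A$ satisfying $\nabla\vdash c\# a.t'$ and $\nabla\vdash c\# b.s'$. Mer: $P;\{X:t_1\triangleq s_1,Y:t_2\triangleq s_2\}\uplus S;\Gamma;\sigma\Rightarrow P;\{X:t_1\triangleq s_1\}\cup S;\Gamma\{Y\mapsto\pi\cdot X\};\sigma\{Y\mapsto\pi\cdot X\}$, where $\pi$ is an $\mathrm{Atoms}(t_1,s_1,t_2,s_2)$-based permutation with $\nabla\vdash\pi\bullet t_1\approx t_2$ and $\nabla\vdash\pi\bullet s_1\approx s_2$. *)

From Stdlib Require Import List Arith Permutation Relations.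
Import ListNotations.
Set Implicit Arguments.

Inductive sort : Type :=
| SAtm (nu : nat)
| SBase (d : nat)
| SAbs (nu : nat) (s : sort).

Definition sort_eq_dec : forall x y : sort, {x = y} + {x <> y}.
Proof. decide equality; apply Nat.eq_dec. Defined.

Record Atom := mkAtom { anm : nat; asrt : nat }.
Definition atom_eq_dec : forall x y : Atom, {x = y} + {x <> y}.
Proof. decide equality; apply Nat.eq_dec. Defined.

Record Var := mkVar { vnm : nat; vsrt : sort }.
Definition var_eq_dec : forall x y : Var, {x = y} + {x <> y}.
Proof. decide equality; [apply sort_eq_dec | apply Nat.eq_dec]. Defined.

Record FSym := mkFSym { fnm : nat; fdom : list sort; fcod : sort }.

(* a permutation is a finite sequence of swappings; sequences act right to left *)
Definition perm := list (Atom * Atom).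

Definition swap_atom (sw : Atom * Atom) (c : Atom) : Atom :=
  let (a, b) := sw in
  if atom_eq_dec c a then b else if atom_eq_dec c b then a else c.

Definition patom (p : perm) (c : Atom) : Atom := fold_right swap_atom c p.

Definition pinv (p : perm) : perm := rev p.

Definition perm_ok (p : perm) : bool :=
  forallb (fun sw => Nat.eqb (asrt (fst sw)) (asrt (snd sw))) p.

Definition perm_atoms (p : perm) : list Atom :=
  flat_map (fun sw => [fst sw; snd sw]) p.

Inductive term : Type :=
| App (f : FSym) (ts : list term)
| At (a : Atom)
| Abs (a : Atom) (t : term)
| Susp (p : perm) (X : Var).

Fixpoint pact (p : perm) (t : term) : term :=
  match t with
  | App f ts => App f (map (pact p) ts)
  | At a => At (patom p a)
  | Abs a u => Abs (patom p a) (pact p u)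
  | Susp q X => Susp (p ++ q) X
  end.

Fixpoint atoms (t : term) : list Atom :=
  match t with
  | App f ts => concat (map atoms ts)
  | At a => [a]
  | Abs a u => a :: atoms u
  | Susp p X => perm_atoms p
  end.

Fixpoint tvars (t : term) : list Var :=
  match t with
  | App f ts => concat (map tvars ts)
  | At a => []
  | Abs a u => tvars u
  | Susp p X => [X]
  end.

Fixpoint free_atoms_ns (t : term) : list Atom :=
  match t with
  | App f ts => concat (map free_atoms_ns ts)
  | At a => [a]
  | Abs a u => filter (fun b => if atom_eq_dec a b then false else true)
                      (free_atoms_ns u)
  | Susp p X => []
  end.

Fixpoint sorts_match (l : list (option sort)) (ds : list sort) : bool :=
  match l, ds with
  | [], [] => true
  | Some s :: l', d :: ds' =>
      if sort_eq_dec s d then sorts_match l' ds' else false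
  | _, _ => false
  end.

Fixpoint wsort (t : term) : option sort :=
  match t with
  | App f ts => if sorts_match (map wsort ts) (fdom f) then Some (fcod f) else None
  | At a => Some (SAtm (asrt a))
  | Abs a u => match wsort u with
               | Some d => Some (SAbs (asrt a) d)
               | None => None
               end
  | Susp p X => if perm_ok p then Some (vsrt X) else None
  end.

Definition subst := Var -> term.

Fixpoint apply_subst (sg : subst) (t : term) : term :=
  match t with
  | App f ts => App f (map (apply_subst sg) ts)
  | At a => At a
  | Abs a u => Abs a (apply_subst sg u)
  | Susp p X => pact p (sg X)
  end.

Definition id_subst : subst := fun X => Susp [] X.

(* composition: first sg, then th *)
Definition compose (sg th : subst) : subst := fun X => apply_subst th (sg X).

Definition single (X : Var) (t : term) : subst :=
  fun Z => if var_eq_dec Z X then t else Susp [] Z.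

Definition sort_preserving (sg : subst) : Prop :=
  forall X, wsort (sg X) = Some (vsrt X).

Definition fctx := list (Atom * Var).

Fixpoint fresh (D : fctx) (a : Atom) (t : term) : Prop :=
  match t with
  | App f ts => (fix go (l : list term) : Prop :=
                   match l with
                   | [] => True
                   | u :: l' => fresh D a u /\ go l'
                   end) ts
  | At b => a <> b
  | Abs b u => a = b \/ (a <> b /\ fresh D a u)
  | Susp p X => In (patom (pinv p) a, X) D
  end.

Inductive aeq (D : fctx) : term -> term -> Prop :=
| aeq_atom : forall a, aeq D (At a) (At a)
| aeq_abs_same : forall a t t', aeq D t t' -> aeq D (Abs a t) (Abs a t')
| aeq_abs_diff : forall a a' t t', a <> a' ->
    aeq D t (pact [(a, a')] t') -> fresh D a t' -> aeq D (Abs a t) (Abs a' t')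
| aeq_susp : forall p p' X,
    (forall a, patom p a <> patom p' a -> In (a, X) D) ->
    aeq D (Susp p X) (Susp p' X)
| aeq_app : forall f ts ts', Forall2 (aeq D) ts ts' -> aeq D (App f ts) (App f ts').

(* The procedure FC, computed: Some Delta, or None for bottom. *)
Fixpoint fc1 (a : Atom) (t : term) : option fctx :=
  match t with
  | App f ts => (fix go (l : list term) : option fctx :=
                   match l with
                   | [] => Some []
                   | u :: l' => match fc1 a u, go l' with
                                | Some d1, Some d2 => Some (d1 ++ d2)
                                | _, _ => None
                                end
                   end) ts
  | At b => if atom_eq_dec a b then None else Some []
  | Abs b u => if atom_eq_dec a b then Some [] else fc1 a u
  | Susp p X => Some [(patom (pinv p) a, X)]
  end.

Fixpoint FC (F : list (Atom * term)) : option fctx :=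
  match F with
  | [] => Some []
  | (a, t) :: F' => match fc1 a t, FC F' with
                    | Some d1, Some d2 => Some (d1 ++ d2)
                    | _, _ => None
                    end
  end.

Definition ctx_subst (D : fctx) (sg : subst) : option fctx :=
  FC (map (fun c => (fst c, sg (snd c))) D).

Definition respects (sg : subst) (D : fctx) : Prop :=
  forall a X, In (a, X) D -> ~ In a (free_atoms_ns (sg X)).

Definition preceq (D1 : fctx) (t1 : term) (D2 : fctx) (t2 : term) : Prop :=
  exists sg : subst,
    sort_preserving sg /\ respects sg D1 /\
    (exists D, ctx_subst D1 sg = Some D /\ incl D D2) /\
    aeq D2 (apply_subst sg t1) t2.

Definition term_based (A : list Atom) (t : term) : Prop := incl (atoms t) A.
Definition ctx_based (A : list Atom) (D : fctx) : Prop :=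
  forall a X, In (a, X) D -> In a A.

Definition A_based_generalization (A : list Atom) (G : fctx) (r : term)
  (D1 : fctx) (t1 : term) (D2 : fctx) (t2 : term) : Prop :=
  ctx_based A G /\ term_based A r /\ preceq G r D1 t1 /\ preceq G r D2 t2.

Definition aut := (Var * term * term)%type.

Record state := mkState { stP : list aut; stS : list aut; stG : fctx; stsig : subst }.

Definition aut_vars (l : list aut) : list Var :=
  flat_map (fun x => match x with (Z, t, s) => Z :: tvars t ++ tvars s end) l.

(* Y is a fresh variable w.r.t. the initial problem (vars listed in U, which
   contains the initial generalization variable X0) and the current state. *)
Definition fresh_var (U : list Var) (X0 : Var) (st : state) (Y : Var) : Prop :=
  ~ In Y U /\ ~ In Y (aut_vars (stP st ++ stS st)) /\ ~ In Y (map snd (stG st)) /\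
  stsig st Y = Susp [] Y /\ ~ In Y (tvars (stsig st X0)).

Inductive head := HF (f : FSym) | HA (a : Atom) | HAbs | HV (X : Var).
Definition head_of (t : term) : head :=
  match t with
  | App f _ => HF f
  | At a => HA a
  | Abs _ _ => HAbs
  | Susp _ X => HV X
  end.

Definition is_susp (t : term) : Prop := exists p X, t = Susp p X.

Definition abs_atom (A : list Atom) (D : fctx) (a : Atom) (t : term)
  (b : Atom) (s : term) (c : Atom) : Prop :=
  In c A /\ asrt c = asrt a /\ asrt c = asrt b /\
  fresh D c (Abs a t) /\ fresh D c (Abs b s).

Definition sol_applicable (A : list Atom) (D : fctx) (t s : term) : Prop :=
  head_of t <> head_of s \/
  (is_susp t /\ is_susp s) \/
  (exists a t' b s', t = Abs a t' /\ s = Abs b s' /\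
     ~ (exists c, abs_atom A D a t' b s' c)).

Definition mk_auts (Ys : list Var) (ts ss : list term) : list aut :=
  map (fun x => match x with (Y, (t, s)) => (Y, t, s) end) (combine Ys (combine ts ss)).

Inductive step (A : list Atom) (D : fctx) (U : list Var) (X0 : Var) :
  state -> state -> Prop :=
| Dec_app : forall P P' S G sg X f ts ss Ys,
    Permutation P ((X, App f ts, App f ss) :: P') ->
    length ts = length ss -> length Ys = length ts -> NoDup Ys ->
    Forall (fresh_var U X0 (mkState P S G sg)) Ys ->
    Forall2 (fun Y t => wsort t = Some (vsrt Y)) Ys ts ->
    step A D U X0 (mkState P S G sg)
      (mkState (mk_auts Ys ts ss ++ P') S G
         (compose sg (single X (App f (map (fun Y => Susp [] Y) Ys)))))
| Dec_atom : forall P P' S G sg X a,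
    Permutation P ((X, At a, At a) :: P') ->
    step A D U X0 (mkState P S G sg)
      (mkState P' S G (compose sg (single X (At a))))
| Abs_rule : forall P P' S G sg X a t b s c Y,
    Permutation P ((X, Abs a t, Abs b s) :: P') ->
    abs_atom A D a t b s c ->
    fresh_var U X0 (mkState P S G sg) Y ->
    wsort (pact [(c, a)] t) = Some (vsrt Y) ->
    step A D U X0 (mkState P S G sg)
      (mkState ((Y, pact [(c, a)] t, pact [(c, b)] s) :: P') S G
         (compose sg (single X (Abs c (Susp [] Y)))))
| Sol : forall P P' S G G' sg X t s,
    Permutation P ((X, t, s) :: P') ->
    sol_applicable A D t s ->
    (forall b Z, In (b, Z) G' <-> Z = X /\ In b A /\ fresh D b t /\ fresh D b s) ->
    step A D U X0 (mkState P S G sg)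
      (mkState P' (S ++ [(X, t, s)]) (G ++ G') sg)
| Mer : forall P S S' G G' sg X t1 s1 Y t2 s2 (pi : perm),
    Permutation S ((X, t1, s1) :: (Y, t2, s2) :: S') ->
    perm_ok pi = true ->
    incl (perm_atoms pi) (atoms t1 ++ atoms s1 ++ atoms t2 ++ atoms s2) ->
    aeq D (pact pi t1) t2 -> aeq D (pact pi s1) s2 ->
    ctx_subst G (single Y (Susp pi X)) = Some G' ->
    step A D U X0 (mkState P S G sg)
      (mkState P ((X, t1, s1) :: S') G' (compose sg (single Y (Susp pi X)))).

Definition ctx_vars (D : fctx) : list Var := map snd D.

From Stdlib Require Import List Relations Permutation Lia.
Import ListNotations.

(* Along a run of N started on X : t =^= s, the states P;S;Gamma;sigma
   satisfy an invariant: every generalization variable has at most one AUT in P u S,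
   all AUTs are well sorted and A-based; every a # Z in Gamma has a in A and a fresh
   (under nabla) for both sides of the AUT of Z in S; X sigma is A-based; and, for each
   side, any substitution sending every generalization variable to (a term alpha-equivalent
   to) that side of its AUT sends X sigma to a term alpha-equivalent to t, resp. s.
   Dec and Abs keep the last property because the new binding of the decomposed variable
   is solved by any solution of the new AUTs (for Abs after renaming the bound atom to the
   fresh c); Mer keeps it, and the freshness part, because alpha-equivalence is
   equivariant and transitive and freshness is invariant under it.  When P is empty, the
   substitution sending each variable to the left (resp. right) side of its AUT in S
   witnesses <Gamma, X sigma> <= <nabla, t> (resp. <nabla, s>). *)

Lemma Forall2_map_l {T U V} (R : U -> V -> Prop) (g : T -> U) l1 l2 :
  Forall2 R (map g l1) l2 <-> Forall2 (fun x y => R (g x) y) l1 l2.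
Proof.
  revert l2; induction l1 as [|x l1 IH]; intros [|y l2]; simpl;
    split; intros H; inversion H; subst; constructor; auto; apply IH; auto.
Qed.

Lemma Forall2_map_r {T U V} (R : T -> V -> Prop) (g : U -> V) l1 l2 :
  Forall2 R l1 (map g l2) <-> Forall2 (fun x y => R x (g y)) l1 l2.
Proof.
  revert l2; induction l1 as [|x l1 IH]; intros [|y l2]; simpl;
    split; intros H; inversion H; subst; constructor; auto; apply IH; auto.
Qed.

Lemma Forall2_trans {T} (R1 R2 R3 : T -> T -> Prop) l1 l2 l3 :
  (forall x y z, In x l1 -> R1 x y -> R2 y z -> R3 x z) ->
  Forall2 R1 l1 l2 -> Forall2 R2 l2 l3 -> Forall2 R3 l1 l3.
Proof.
  intros HR H12; revert l3; induction H12; intros l3 H23; inversion H23; subst;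
    constructor; eauto using in_eq, in_cons.
Qed.

Lemma Forall2_map_congr {T U V} (g : U -> V) (h : T -> V) l us vs :
  Forall2 (fun x u => g u = h x) l us -> map g us = map g vs ->
  Forall2 (fun x v => g v = h x) l vs.
Proof.
  intros H; revert vs; induction H as [|x u l us Hu _ IH]; intros [|v vs] E;
    simpl in E; try discriminate; constructor; injection E; intros; auto.
  congruence.
Qed.

Lemma Permutation_in_cons_iff {T} (L L' : list T) e x :
  Permutation L (e :: L') -> In x L <-> e = x \/ In x L'.
Proof.
  intros H; split; intros Hx.
  - exact (Permutation_in _ H Hx).
  - exact (Permutation_in _ (Permutation_sym H) Hx).
Qed.

(** * Permutations of atoms *)

Ltac swap_cases :=
  unfold swap_atom; repeat (destruct atom_eq_dec; subst); congruence.

Lemma swap_atom_involutive sw c : swap_atom sw (swap_atom sw c) = c.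
Proof. destruct sw as [a b]; swap_cases. Qed.

Lemma swap_atom_r a b : swap_atom (a, b) b = a.
Proof. swap_cases. Qed.

Lemma swap_atom_other a b c : c <> a -> c <> b -> swap_atom (a, b) c = c.
Proof. swap_cases. Qed.

Lemma swap_atom_comm a b c : swap_atom (a, b) c = swap_atom (b, a) c.
Proof. swap_cases. Qed.

Lemma swap_atom_diag a c : swap_atom (a, a) c = c.
Proof. swap_cases. Qed.

Lemma patom_app p q a : patom (p ++ q) a = patom p (patom q a).
Proof. unfold patom; rewrite fold_right_app; reflexivity. Qed.

Lemma patom_single sw c : patom [sw] c = swap_atom sw c.
Proof. reflexivity. Qed.

Lemma patom_pinv_l p a : patom (pinv p) (patom p a) = a.
Proof.
  revert a; induction p as [|sw p IH]; intros a; [reflexivity|].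
  unfold pinv; simpl; rewrite patom_app; simpl.
  rewrite swap_atom_involutive; apply IH.
Qed.

Lemma patom_pinv_r p a : patom p (patom (pinv p) a) = a.
Proof.
  revert a; induction p as [|sw p IH]; intros a; [reflexivity|].
  unfold pinv; simpl; rewrite patom_app; simpl.
  fold (pinv p); rewrite IH; apply swap_atom_involutive.
Qed.

Lemma patom_inj p a b : patom p a = patom p b -> a = b.
Proof.
  intros E; rewrite <- (patom_pinv_l p a), <- (patom_pinv_l p b), E; reflexivity.
Qed.

Lemma patom_swap_atom p a b c :
  patom p (swap_atom (a, b) c) = swap_atom (patom p a, patom p b) (patom p c).
Proof.
  unfold swap_atom.
  destruct (atom_eq_dec c a) as [->|Hca];
    [destruct atom_eq_dec; congruence|].
  destruct (atom_eq_dec (patom p c) (patom p a)) as [E|_];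
    [apply patom_inj in E; congruence|].
  destruct (atom_eq_dec c b) as [->|Hcb];
    [destruct atom_eq_dec; congruence|].
  destruct (atom_eq_dec (patom p c) (patom p b)) as [E|_];
    [apply patom_inj in E; congruence|reflexivity].
Qed.

Definition perm_equiv (p q : perm) : Prop := forall a, patom p a = patom q a.

Lemma perm_equiv_pinv p q : perm_equiv p q -> perm_equiv (pinv p) (pinv q).
Proof.
  intros Hpq a; apply (patom_inj q).
  rewrite patom_pinv_r, <- Hpq, patom_pinv_r; reflexivity.
Qed.

Lemma patom_asrt p a : perm_ok p = true -> asrt (patom p a) = asrt a.
Proof.
  induction p as [|[x y] p IH]; intros Hp; [reflexivity|].
  simpl in Hp; apply andb_prop in Hp as [Hxy Hp]; apply PeanoNat.Nat.eqb_eq in Hxy.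
  simpl; unfold swap_atom.
  destruct atom_eq_dec as [E|]; [rewrite <- IH, E; auto|].
  destruct atom_eq_dec as [E|]; [rewrite <- IH, E; auto|auto].
Qed.

Lemma patom_perm_atoms p a : patom p a = a \/ In (patom p a) (perm_atoms p).
Proof.
  induction p as [|[x y] p IH]; [auto|].
  simpl; unfold swap_atom.
  destruct atom_eq_dec; [simpl; auto|].
  destruct atom_eq_dec; [simpl; auto|].
  destruct IH; simpl; auto.
Qed.

Lemma perm_atoms_pinv p : incl (perm_atoms (pinv p)) (perm_atoms p).
Proof.
  unfold pinv, perm_atoms; induction p as [|[a b] p IH]; intros x Hx; [exact Hx|].
  simpl in Hx; rewrite flat_map_app in Hx; apply in_app_or in Hx as [Hx|Hx].
  - right; right; auto.
  - simpl in Hx; simpl; tauto.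
Qed.

Lemma patom_pinv_in A p a : incl (perm_atoms p) A -> In a A -> In (patom (pinv p) a) A.
Proof.
  intros Hp Ha; destruct (patom_perm_atoms (pinv p) a) as [->|H]; auto.
  apply Hp, perm_atoms_pinv, H.
Qed.

(** * Terms, freshness and alpha-equivalence *)

Section TermInd.
Variable P : term -> Prop.
Hypothesis HApp : forall f ts, Forall P ts -> P (App f ts).
Hypothesis HAt : forall a, P (At a).
Hypothesis HAbs : forall a t, P t -> P (Abs a t).
Hypothesis HSusp : forall p X, P (Susp p X).

Fixpoint term_nested_ind (t : term) : P t :=
  match t with
  | App f ts => HApp f ts ((fix go (l : list term) : Forall P l :=
                  match l with
                  | [] => Forall_nil P
                  | u :: l' => Forall_cons u (term_nested_ind u) (go l')
                  end) ts)
  | At a => HAt a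
  | Abs a u => HAbs a u (term_nested_ind u)
  | Susp p X => HSusp p X
  end.
End TermInd.

Lemma pact_nil t : pact [] t = t.
Proof.
  induction t using term_nested_ind; simpl; f_equal; auto.
  rewrite <- map_id; apply map_ext_Forall; exact H.
Qed.

Lemma pact_app p q t : pact p (pact q t) = pact (p ++ q) t.
Proof.
  induction t using term_nested_ind; simpl; f_equal;
    auto using patom_app, app_assoc.
  rewrite map_map; apply map_ext_Forall; exact H.
Qed.

Fixpoint term_size (t : term) : nat :=
  match t with
  | App f ts => S ((fix sz (l : list term) : nat :=
                      match l with [] => 0 | u :: l' => term_size u + sz l' end) ts)
  | At _ => 1
  | Abs _ u => S (term_size u)
  | Susp _ _ => 1
  end.

Lemma term_size_App_in f ts u : In u ts -> term_size u < term_size (App f ts).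
Proof.
  intros Hu; simpl; induction ts as [|v ts IH]; [contradiction|].
  destruct Hu as [->|Hu]; [lia|specialize (IH Hu); lia].
Qed.

Lemma fresh_App D a f ts : fresh D a (App f ts) <-> Forall (fresh D a) ts.
Proof.
  induction ts as [|u ts IH]; simpl; [split; auto|].
  simpl in IH; rewrite IH, Forall_cons_iff; reflexivity.
Qed.

Lemma fresh_pact D p t a : fresh D a (pact p t) <-> fresh D (patom (pinv p) a) t.
Proof.
  revert a; induction t as [f ts IH| b | b u IH | q X] using term_nested_ind; intros a.
  - simpl pact; rewrite !fresh_App, Forall_map, !Forall_forall.
    rewrite Forall_forall in IH; firstorder.
  - simpl; split; intros Hne E; apply Hne.
    + rewrite <- E, patom_pinv_r; reflexivity.
    + rewrite E, patom_pinv_l; reflexivity.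
  - simpl; rewrite IH; split; intros [E|[Hne Hf]].
    + left; rewrite E, patom_pinv_l; reflexivity.
    + right; split; auto; intros E; apply Hne; rewrite <- E, patom_pinv_r; reflexivity.
    + left; rewrite <- E, patom_pinv_r; reflexivity.
    + right; split; auto; intros E; apply Hne; rewrite E, patom_pinv_l; reflexivity.
  - simpl; unfold pinv; rewrite rev_app_distr, patom_app; reflexivity.
Qed.

Lemma fresh_pact_swap D a b c t :
  fresh D c (pact [(a, b)] t) <-> fresh D (swap_atom (a, b) c) t.
Proof. rewrite fresh_pact; reflexivity. Qed.

Lemma fresh_not_free D a t : fresh D a t -> ~ In a (free_atoms_ns t).
Proof.
  induction t as [f ts IH| b | b u IH | q X] using term_nested_ind;
    intros Hf Hin; simpl in Hin.
  - rewrite fresh_App, Forall_forall in Hf; rewrite Forall_forall in IH.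
    apply in_concat in Hin as [l [Hl Ha]].
    apply in_map_iff in Hl as [u [<- Hu]]; exact (IH u Hu (Hf u Hu) Ha).
  - destruct Hin as [E|[]]; auto.
  - apply filter_In in Hin as [Hin Hb].
    destruct atom_eq_dec; [discriminate|].
    destruct Hf as [E|[_ Hf]]; [congruence|exact (IH Hf Hin)].
  - exact Hin.
Qed.

Section AeqInd.
Variable D : fctx.
Variable P : term -> term -> Prop.
Hypothesis Hat : forall a, P (At a) (At a).
Hypothesis Hsame : forall a t t', aeq D t t' -> P t t' -> P (Abs a t) (Abs a t').
Hypothesis Hdiff : forall a a' t t', a <> a' -> aeq D t (pact [(a, a')] t') ->
   P t (pact [(a, a')] t') -> fresh D a t' -> P (Abs a t) (Abs a' t').
Hypothesis Hsusp : forall p p' X,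
    (forall a, patom p a <> patom p' a -> In (a, X) D) -> P (Susp p X) (Susp p' X).
Hypothesis Happ : forall f ts ts', Forall2 (fun x y => aeq D x y /\ P x y) ts ts' ->
   P (App f ts) (App f ts').

Lemma aeq_nested_ind t t' : aeq D t t' -> P t t'.
Proof.
  revert t t'; fix IH 3; intros t t' H; destruct H.
  - apply Hat.
  - apply Hsame; auto.
  - apply Hdiff; auto.
  - apply Hsusp; auto.
  - apply Happ; induction H; constructor; auto.
Qed.
End AeqInd.

Lemma aeq_refl D t : aeq D t t.
Proof.
  induction t as [f ts IH| a | a t IH | p X] using term_nested_ind; constructor.
  - induction IH; constructor; auto.
  - exact IH.
  - intros c E; congruence.
Qed.

Lemma aeq_perm_equiv_r D u p q v :
  aeq D u (pact p v) -> perm_equiv p q -> aeq D u (pact q v).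
Proof.
  intros H; remember (pact p v) as w eqn:Ew; revert p q v Ew.
  induction H as [a|a t t' _ IH|a a' t t' Ha _ IH Hf|r r' X HX|f ts ts' Hts]
    using aeq_nested_ind; intros p q v Ew Hpq;
    destruct v; simpl in Ew; try discriminate; injection Ew; intros; subst; simpl.
  - rewrite Hpq; constructor.
  - rewrite Hpq; constructor; eapply IH; eauto.
  - rewrite <- (Hpq a0); apply aeq_abs_diff; auto.
    + rewrite pact_app; apply (IH ([(a, patom p a0)] ++ p)).
      * rewrite pact_app; reflexivity.
      * intros c; rewrite !patom_app, (Hpq a0), (Hpq c); reflexivity.
    + rewrite fresh_pact in *; rewrite <- (perm_equiv_pinv p q Hpq); exact Hf.
  - constructor; intros c Hc; apply HX.
    rewrite patom_app in *; rewrite Hpq; exact Hc.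
  - constructor; apply Forall2_map_r; apply Forall2_map_r in Hts.
    eapply Forall2_impl; [|exact Hts]; intros x y [_ Hxy]; eauto.
Qed.

Lemma aeq_pact D t t' p : aeq D t t' -> aeq D (pact p t) (pact p t').
Proof.
  intros H; revert p.
  induction H as [a|a t t' _ IH|a a' t t' Ha _ IH Hf|r r' X HX|f ts ts' Hts]
    using aeq_nested_ind; intros p; simpl.
  - constructor.
  - constructor; auto.
  - apply aeq_abs_diff.
    + intros E; apply patom_inj in E; auto.
    + rewrite pact_app; apply (aeq_perm_equiv_r _ _ (p ++ [(a, a')])).
      * rewrite <- pact_app; apply IH.
      * intros c; rewrite !patom_app; apply patom_swap_atom.
    + rewrite fresh_pact, patom_pinv_l; exact Hf.
  - constructor; intros c Hc; apply HX.
    rewrite !patom_app in Hc; intros E; apply Hc; rewrite E; reflexivity.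
  - constructor; apply Forall2_map_l, Forall2_map_r.
    eapply Forall2_impl; [|exact Hts]; intros x y [_ Hxy]; auto.
Qed.

Lemma fresh_aeq D t t' a : aeq D t t' -> fresh D a t <-> fresh D a t'.
Proof.
  intros H; revert a.
  induction H as [c|c t t' _ IH|c c' t t' Hc _ IH Hf|p p' X HX|f ts ts' Hts]
    using aeq_nested_ind; intros a.
  - reflexivity.
  - simpl; rewrite IH; reflexivity.
  - simpl; rewrite IH, fresh_pact_swap.
    destruct (atom_eq_dec a c) as [->|Hac].
    + split; intros _; [right; auto|left; reflexivity].
    + destruct (atom_eq_dec a c') as [->|Hac'].
      * rewrite swap_atom_r; split; intros _; [left; reflexivity|right; auto].
      * rewrite swap_atom_other by auto.
        split; intros [E|[_ F]]; try congruence; right; auto.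
  - simpl; unfold pinv.
    set (c := patom (rev p) a); set (c' := patom (rev p') a).
    assert (Hc : patom p c = a) by apply patom_pinv_r.
    assert (Hc' : patom p' c' = a) by apply patom_pinv_r.
    destruct (atom_eq_dec c c') as [E|Hne]; [rewrite E; reflexivity|].
    split; intros _; apply HX; intros E; apply Hne.
    + apply (patom_inj p); congruence.
    + apply (patom_inj p'); congruence.
  - rewrite !fresh_App.
    induction Hts as [|x y ts ts' [_ Hxy] _ IHts]; [split; constructor|].
    rewrite !Forall_cons_iff, (Hxy a), IHts; reflexivity.
Qed.

Lemma fresh_pinv_aeq D p t t' a :
  aeq D (pact p t) t' -> fresh D a t' -> fresh D (patom (pinv p) a) t.
Proof. intros H F; apply fresh_pact, (fresh_aeq _ _ _ a H), F. Qed.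

Lemma aeq_pact_ds D t p q :
  (forall c, patom p c <> patom q c -> fresh D c t) -> aeq D (pact p t) (pact q t).
Proof.
  revert p q; induction t as [f ts IH| a | a t IH | r X] using term_nested_ind;
    intros p q Hds; simpl.
  - constructor; apply Forall2_map_l, Forall2_map_r.
    induction IH as [|u ts Hu _ IHts]; constructor.
    + apply Hu; intros c Hc; specialize (Hds c Hc).
      rewrite fresh_App, Forall_cons_iff in Hds; apply Hds.
    + apply IHts; intros c Hc; specialize (Hds c Hc).
      rewrite fresh_App, Forall_cons_iff in Hds; apply fresh_App, Hds.
  - destruct (atom_eq_dec (patom p a) (patom q a)) as [E|E].
    + rewrite E; constructor.
    + specialize (Hds a E); simpl in Hds; congruence.
  - destruct (atom_eq_dec (patom p a) (patom q a)) as [E|E].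
    + rewrite E; constructor; apply IH; intros c Hc.
      destruct (Hds c Hc) as [->|[_ F]]; [congruence|exact F].
    + apply aeq_abs_diff; auto.
      * rewrite pact_app; apply IH; intros c Hc.
        assert (Hca : c <> a).
        { intros ->; rewrite patom_app, patom_single in Hc.
          rewrite swap_atom_r in Hc; congruence. }
        assert (Hpq : patom p c <> patom q c).
        { intros E'; apply Hc; rewrite patom_app, patom_single.
          rewrite swap_atom_other; auto; intros E''.
          - apply Hca, (patom_inj p); congruence.
          - apply Hca, (patom_inj q); congruence. }
        destruct (Hds c Hpq) as [->|[_ F]]; [congruence|exact F].
      * rewrite fresh_pact.
        set (b := patom (pinv q) (patom p a)).
        assert (Hb : patom q b = patom p a) by apply patom_pinv_r.
        assert (Hba : b <> a) by (intros Eb; rewrite Eb in Hb; congruence).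
        assert (Hpq : patom p b <> patom q b).
        { rewrite Hb; intros E'; apply patom_inj in E'; congruence. }
        destruct (Hds b Hpq) as [Eb|[_ F]]; [congruence|exact F].
  - constructor; intros c Hc; rewrite !patom_app in Hc.
    specialize (Hds _ Hc); simpl in Hds; rewrite patom_pinv_l in Hds; exact Hds.
Qed.

Lemma aeq_pact_swap_chain D a a' c u :
  fresh D a u -> fresh D a' u ->
  aeq D (pact ([(a, a')] ++ [(a', c)]) u) (pact [(a, c)] u).
Proof.
  intros Fa Fa'; apply aeq_pact_ds; intros x Hx.
  destruct (atom_eq_dec x a) as [->|Hxa]; [exact Fa|].
  destruct (atom_eq_dec x a') as [->|Hxa']; [exact Fa'|].
  exfalso; apply Hx; rewrite patom_app, !patom_single.
  destruct (atom_eq_dec x c) as [->|Hxc].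
  - rewrite !swap_atom_r; reflexivity.
  - rewrite !(swap_atom_other _ _ x); auto.
Qed.

(* Induction on the size of [t] rather than on the derivation: in the abstraction
   cases the middle term is permuted before the induction hypothesis is used. *)
Lemma aeq_trans_size D n t t' t'' :
  term_size t < n -> aeq D t t' -> aeq D t' t'' -> aeq D t t''.
Proof.
  revert t t' t''; induction n as [|n IH]; intros t t' t'' Hn H1 H2; [lia|].
  destruct H1 as [a|a t t' H1|a a' t t' Haa' H1 Fa|p p' X HX|f ts ts' Hts].
  - exact H2.
  - simpl in Hn; inversion H2; subst.
    + constructor; eauto with arith.
    + apply aeq_abs_diff; eauto with arith.
  - simpl in Hn; inversion H2 as [|? ? u Hu|? c ? u Ha'c Hu Fa'| |]; subst.
    + apply aeq_abs_diff; auto.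
      * apply (IH t _ _ ltac:(lia) H1), aeq_pact, Hu.
      * apply (proj1 (fresh_aeq _ _ _ a Hu)), Fa.
    + assert (Hacu : aeq D t (pact ([(a, a')] ++ [(a', c)]) u)).
      { rewrite <- pact_app; apply (IH t _ _ ltac:(lia) H1), aeq_pact, Hu. }
      destruct (atom_eq_dec a c) as [<-|Hac].
      * constructor; rewrite <- (pact_nil u).
        apply (aeq_perm_equiv_r _ _ _ _ _ Hacu); intros x.
        rewrite patom_app, !patom_single, swap_atom_comm, swap_atom_involutive.
        reflexivity.
      * assert (Fau : fresh D a u).
        { apply (fresh_aeq _ _ _ a Hu), fresh_pact_swap in Fa.
          rewrite swap_atom_other in Fa; auto. }
        apply aeq_abs_diff; auto.
        apply (IH t _ _ ltac:(lia) Hacu), aeq_pact_swap_chain; assumption.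
  - inversion H2 as [| | |q1 q1' X1 HX1|]; subst; constructor; intros c Hc.
    destruct (atom_eq_dec (patom p c) (patom p' c)) as [E|E]; auto.
    apply HX1; congruence.
  - inversion H2 as [| | | |f1 ts1 ts1' Hts1]; subst; constructor.
    eapply Forall2_trans; [|exact Hts|exact Hts1].
    intros x y z Hx; apply IH.
    pose proof (term_size_App_in f ts x Hx); lia.
Qed.

Lemma aeq_trans D t t' t'' : aeq D t t' -> aeq D t' t'' -> aeq D t t''.
Proof. apply (aeq_trans_size D (S (term_size t))); lia. Qed.

Lemma aeq_Abs_rename D c a t u :
  fresh D c (Abs a t) -> aeq D u (pact [(c, a)] t) -> aeq D (Abs c u) (Abs a t).
Proof.
  intros Fc Hu; destruct (atom_eq_dec c a) as [<-|Hca].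
  - constructor; rewrite <- (pact_nil t).
    apply (aeq_perm_equiv_r _ _ _ _ _ Hu); intros x; apply swap_atom_diag.
  - apply aeq_abs_diff; auto.
    destruct Fc as [|[_ Fc]]; [congruence|exact Fc].
Qed.

Lemma apply_subst_pact th p u :
  apply_subst th (pact p u) = pact p (apply_subst th u).
Proof.
  induction u as [f ts IH| b | b u IH | q X] using term_nested_ind; simpl.
  - rewrite !map_map; f_equal; apply map_ext_Forall; exact IH.
  - reflexivity.
  - rewrite IH; reflexivity.
  - rewrite pact_app; reflexivity.
Qed.

Lemma apply_subst_compose sg th u :
  apply_subst th (apply_subst sg u) = apply_subst (compose sg th) u.
Proof.
  induction u as [f ts IH| b | b u IH | q X] using term_nested_ind; simpl.
  - rewrite !map_map; f_equal; apply map_ext_Forall; exact IH.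
  - reflexivity.
  - rewrite IH; reflexivity.
  - apply apply_subst_pact.
Qed.

Lemma compose_single X v th Z :
  compose (single X v) th Z = if var_eq_dec Z X then apply_subst th v else th Z.
Proof. unfold compose, single; destruct var_eq_dec; simpl; auto using pact_nil. Qed.

Lemma fc1_fresh D a t : fresh D a t -> exists d, fc1 a t = Some d /\ incl d D.
Proof.
  induction t as [f ts IH| b | b u IH | p X] using term_nested_ind; intros Hf.
  - rewrite fresh_App in Hf; induction IH as [|u ts Hu _ IHts].
    + exists []; split; [reflexivity|apply incl_nil_l].
    + apply Forall_cons_iff in Hf as [Fu Fts].
      destruct (Hu Fu) as [d1 [E1 I1]], (IHts Fts) as [d2 [E2 I2]].
      exists (d1 ++ d2); split; [simpl in *; rewrite E1, E2; reflexivity|].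
      apply incl_app; assumption.
  - simpl in *; destruct atom_eq_dec; [contradiction|].
    exists []; split; [reflexivity|apply incl_nil_l].
  - simpl in *; destruct atom_eq_dec.
    + exists []; split; [reflexivity|apply incl_nil_l].
    + destruct Hf as [|[_ Hf]]; [contradiction|auto].
  - exists [(patom (pinv p) a, X)]; split; [reflexivity|].
    intros x [<-|[]]; exact Hf.
Qed.

Lemma FC_in F G x : FC F = Some G -> In x G ->
  exists a u d, In (a, u) F /\ fc1 a u = Some d /\ In x d.
Proof.
  revert G; induction F as [|[a u] F IH]; intros G E Hx; simpl in E.
  - injection E as <-; contradiction.
  - destruct (fc1 a u) as [d|] eqn:E1; [|discriminate].
    destruct (FC F) as [G'|]; [|discriminate].
    injection E as <-; apply in_app_or in Hx as [Hx|Hx].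
    + exists a, u, d; auto using in_eq.
    + destruct (IH G' eq_refl Hx) as (a' & u' & d' & H1 & H2 & H3).
      exists a', u', d'; auto using in_cons.
Qed.

Lemma FC_fresh D F : (forall a u, In (a, u) F -> fresh D a u) ->
  exists G, FC F = Some G /\ incl G D.
Proof.
  induction F as [|[a u] F IH]; intros HF; simpl.
  - exists []; split; [reflexivity|apply incl_nil_l].
  - destruct (fc1_fresh D a u (HF a u (in_eq _ _))) as [d [-> Id]].
    destruct IH as [G [-> IG]]; [intros; apply HF; right; assumption|].
    exists (d ++ G); split; [reflexivity|apply incl_app; assumption].
Qed.

Lemma ctx_subst_single_Susp_in G Y pi X G' a' Z' :
  ctx_subst G (single Y (Susp pi X)) = Some G' -> In (a', Z') G' ->
  (exists a, In (a, Y) G /\ a' = patom (pinv pi) a /\ Z' = X) \/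
  (In (a', Z') G /\ Z' <> Y).
Proof.
  unfold ctx_subst; intros E H.
  destruct (FC_in _ _ _ E H) as (a & u & d & Hau & Hd & Hx).
  apply in_map_iff in Hau as [[a0 Z0] [Eau HZ0]]; simpl in Eau; injection Eau as <- <-.
  unfold single in Hd; destruct var_eq_dec as [->|HZ0Y]; simpl in Hd;
    injection Hd as <-; destruct Hx as [Ex|[]]; injection Ex as <- <-.
  - left; exists a0; auto.
  - right; auto.
Qed.

Lemma wsort_pact p t : perm_ok p = true -> wsort (pact p t) = wsort t.
Proof.
  intros Hp; induction t as [f ts IH| b | b u IH | q X] using term_nested_ind; simpl.
  - rewrite map_map, (map_ext_Forall _ _ IH); reflexivity.
  - rewrite patom_asrt; auto.
  - rewrite IH, patom_asrt; auto.
  - unfold perm_ok in *; rewrite forallb_app, Hp; reflexivity.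
Qed.

Lemma sorts_match_map_Some l ds : sorts_match l ds = true -> l = map Some ds.
Proof.
  revert ds; induction l as [|[o|] l IH]; intros [|d ds] H; simpl in H;
    try discriminate; auto.
  destruct sort_eq_dec as [->|]; [|discriminate].
  simpl; f_equal; auto.
Qed.

Lemma atoms_App_in f ts u : In u ts -> incl (atoms u) (atoms (App f ts)).
Proof.
  intros Hu x Hx; simpl; apply in_concat; exists (atoms u); auto using in_map.
Qed.

Lemma atoms_pact p t : incl (atoms (pact p t)) (perm_atoms p ++ atoms t).
Proof.
  induction t as [f ts IH| b | b u IH | q X] using term_nested_ind; intros x Hx;
    simpl in Hx.
  - apply in_concat in Hx as [l [Hl Hx]].
    apply in_map_iff in Hl as [u' [<- Hu']]; apply in_map_iff in Hu' as [v [<- Hv]].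
    rewrite Forall_forall in IH; apply IH in Hx; auto.
    apply in_app_or in Hx as [Hx|Hx]; apply in_or_app; auto.
    right; exact (atoms_App_in f ts v Hv x Hx).
  - destruct Hx as [<-|[]].
    destruct (patom_perm_atoms p b) as [->|H]; apply in_or_app; simpl; auto.
  - destruct Hx as [<-|Hx].
    + destruct (patom_perm_atoms p b) as [->|H]; apply in_or_app; simpl; auto.
    + apply IH, in_app_or in Hx as [Hx|Hx]; apply in_or_app; simpl; auto.
  - unfold perm_atoms in *; rewrite flat_map_app in Hx; exact Hx.
Qed.

Lemma atoms_apply_single X v u :
  incl (atoms (apply_subst (single X v) u)) (atoms u ++ atoms v).
Proof.
  induction u as [f ts IH| b | b u IH | q Y] using term_nested_ind; intros x Hx;
    simpl in Hx.
  - apply in_concat in Hx as [l [Hl Hx]].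
    apply in_map_iff in Hl as [u' [<- Hu']]; apply in_map_iff in Hu' as [w [<- Hw]].
    rewrite Forall_forall in IH; apply IH in Hx; auto.
    apply in_app_or in Hx as [Hx|Hx]; apply in_or_app; auto.
    left; exact (atoms_App_in f ts w Hw x Hx).
  - destruct Hx as [<-|[]]; left; reflexivity.
  - destruct Hx as [<-|Hx]; [left; reflexivity|].
    apply IH, in_app_or in Hx as [Hx|Hx]; apply in_or_app; simpl; auto.
  - apply atoms_pact in Hx; unfold single in Hx; simpl.
    destruct var_eq_dec; simpl in Hx; apply in_app_or in Hx as [Hx|Hx];
      apply in_or_app; auto; contradiction.
Qed.

(** * Anti-unification problems *)

Definition side {T} (b : bool) (x y : T) : T := if b then x else y.

Definition functional (L : list aut) : Prop :=
  forall Z t s t' s', In (Z, t, s) L -> In (Z, t', s') L -> t = t' /\ s = s'.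

Lemma functional_incl L L' : incl L' L -> functional L -> functional L'.
Proof. intros HL HF Z t s t' s' H1 H2; apply (HF Z); auto. Qed.

Lemma functional_app N L :
  functional N -> functional L ->
  (forall Z t s t' s', In (Z, t, s) N -> ~ In (Z, t', s') L) ->
  functional (N ++ L).
Proof.
  intros HN HL Hdisj Z t s t' s' H1 H2.
  apply in_app_or in H1 as [H1|H1]; apply in_app_or in H2 as [H2|H2];
    eauto; exfalso; eapply Hdisj; eauto.
Qed.

Lemma in_aut_vars L Z t s : In (Z, t, s) L -> In Z (aut_vars L).
Proof. intros H; apply in_flat_map; exists (Z, t, s); simpl; auto. Qed.

Lemma mk_auts_in Ys ts ss Y t s :
  In (Y, t, s) (mk_auts Ys ts ss) -> In Y Ys /\ In t ts /\ In s ss.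
Proof.
  revert ts ss; induction Ys as [|Y0 Ys IH]; intros [|t0 ts] [|s0 ss] H;
    try contradiction; destruct H as [E|H].
  - injection E as -> -> ->; simpl; auto.
  - destruct (IH _ _ H) as (? & ? & ?); simpl; auto.
Qed.

Lemma mk_auts_functional Ys ts ss : NoDup Ys -> functional (mk_auts Ys ts ss).
Proof.
  revert ts ss; induction Ys as [|Y0 Ys IH];
    intros [|t0 ts] [|s0 ss] ND Z t s t' s' H1 H2; try contradiction.
  inversion ND as [|? ? HY0 ND']; subst.
  destruct H1 as [E1|H1], H2 as [E2|H2].
  - rewrite E1 in E2; injection E2; auto.
  - injection E1 as -> -> ->; apply mk_auts_in in H2; tauto.
  - injection E2 as -> -> ->; apply mk_auts_in in H1; tauto.
  - eapply IH; eauto.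
Qed.

Lemma mk_auts_Forall2 (R R' : Var -> term -> Prop) Ys ts ss Y t s :
  Forall2 R Ys ts -> Forall2 R' Ys ss ->
  In (Y, t, s) (mk_auts Ys ts ss) -> R Y t /\ R' Y s.
Proof.
  intros H; revert ss; induction H as [|Y0 t0 Ys ts H0 _ IH]; intros ss H' Hin;
    [contradiction|].
  inversion H' as [|? s0 ? ss' H0' H'']; subst.
  destruct Hin as [E|Hin]; [injection E as -> -> ->; auto|eauto].
Qed.

Lemma Forall2_mk_auts_side b (R : Var -> term -> Prop) Ys ts ss :
  length Ys = length ts -> length ts = length ss ->
  (forall Y t s, In (Y, t, s) (mk_auts Ys ts ss) -> R Y (side b t s)) ->
  Forall2 R Ys (side b ts ss).
Proof.
  revert ts ss; induction Ys as [|Y Ys IH]; intros [|t ts] [|s ss] L1 L2 H;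
    simpl in *; try discriminate; destruct b; constructor;
    try (apply (H Y t s); left; reflexivity);
    apply (IH ts ss); auto; intros; apply H; right; assumption.
Qed.

Definition aut_solution (b : bool) (S : list aut) : subst := fun Z =>
  match find (fun e => if var_eq_dec (fst (fst e)) Z then true else false) S with
  | Some (_, t, s) => side b t s
  | None => Susp [] Z
  end.

Lemma aut_solution_in b S Z t s :
  functional S -> In (Z, t, s) S -> aut_solution b S Z = side b t s.
Proof.
  intros HF HZ; unfold aut_solution; destruct find as [[[Z' t'] s']|] eqn:E.
  - apply find_some in E as [HZ' E]; simpl in E.
    destruct var_eq_dec as [->|]; [|discriminate].
    destruct (HF _ _ _ _ _ HZ HZ') as [-> ->]; reflexivity.
  - apply (find_none _ _ E) in HZ; simpl in HZ.
    destruct var_eq_dec; [discriminate|contradiction].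
Qed.

(** * The invariant of algorithm N *)

Section Invariant.
Variables (A : list Atom) (nabla : fctx) (t0 s0 : term) (X0 : Var).

Definition solves (b : bool) (th : subst) (L : list aut) : Prop :=
  forall Z t s, In (Z, t, s) L -> aeq nabla (th Z) (side b t s).

Definition sound (b : bool) (L : list aut) (sg : subst) : Prop :=
  forall th, solves b th L -> aeq nabla (apply_subst th (sg X0)) (side b t0 s0).

Definition wf_aut (Z : Var) (t s : term) : Prop :=
  wsort t = Some (vsrt Z) /\ wsort s = Some (vsrt Z) /\
  term_based A t /\ term_based A s.

Record invariant (st : state) : Prop := {
  inv_functional : functional (stP st ++ stS st);
  inv_wf : forall Z t s, In (Z, t, s) (stP st ++ stS st) -> wf_aut Z t s;
  inv_ctx : forall a Z, In (a, Z) (stG st) ->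
    In a A /\ exists t s, In (Z, t, s) (stS st) /\ fresh nabla a t /\ fresh nabla a s;
  inv_based : term_based A (stsig st X0);
  inv_sound : forall b, sound b (stP st ++ stS st) (stsig st) }.

Lemma sound_incl b L L' sg : incl L L' -> sound b L sg -> sound b L' sg.
Proof. intros HL Hs th Hth; apply Hs; intros Z t s HZ; apply Hth, HL, HZ. Qed.

Lemma sound_compose b L L' sg X tX sX v :
  functional L -> In (X, tX, sX) L ->
  (forall Z t s, In (Z, t, s) L -> Z <> X -> In (Z, t, s) L') ->
  (forall th, solves b th L' -> aeq nabla (apply_subst th v) (side b tX sX)) ->
  sound b L sg -> sound b L' (compose sg (single X v)).
Proof.
  intros HF HX Hkeep Hv Hs th Hth; unfold compose; rewrite apply_subst_compose.
  apply Hs; intros Z t s HZ; rewrite compose_single.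
  destruct var_eq_dec as [->|HZX].
  - destruct (HF _ _ _ _ _ HZ HX) as [-> ->]; auto.
  - apply Hth, Hkeep; assumption.
Qed.

Lemma invariant_replace P P' S G sg X tX sX N v :
  Permutation P ((X, tX, sX) :: P') ->
  functional N ->
  (forall Z t s t' s', In (Z, t, s) N -> ~ In (Z, t', s') (P ++ S)) ->
  (forall Z t s, In (Z, t, s) N -> wf_aut Z t s) ->
  term_based A v ->
  (forall b th, solves b th N -> aeq nabla (apply_subst th v) (side b tX sX)) ->
  invariant (mkState P S G sg) ->
  invariant (mkState (N ++ P') S G (compose sg (single X v))).
Proof.
  intros HP HN Hdisj HwfN Hv Hsol [HF Hwf HG HB HS]; simpl in *.
  pose proof (Permutation_app_tail S HP) as HPS; simpl in HPS.
  assert (Hold : incl (P' ++ S) (P ++ S)).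
  { intros e He; apply (Permutation_in_cons_iff _ _ _ _ HPS); auto. }
  constructor; simpl; rewrite <- ?app_assoc.
  - apply functional_app; eauto using functional_incl.
    intros Z t s t' s' HZ HZ'; exact (Hdisj Z t s t' s' HZ (Hold _ HZ')).
  - intros Z t s H; apply in_app_or in H as [H|H]; auto.
  - exact HG.
  - intros x Hx; apply atoms_apply_single, in_app_or in Hx as [Hx|Hx]; auto.
  - intros b; apply (sound_compose b (P ++ S)) with tX sX; auto.
    + apply (Permutation_in_cons_iff _ _ _ _ HPS); left; reflexivity.
    + intros Z t s HZ HZX; apply (Permutation_in_cons_iff _ _ _ _ HPS) in HZ.
      destruct HZ as [E|HZ]; [injection E; intros; congruence|].
      apply in_or_app; right; exact HZ.
    + intros th Hth; apply Hsol; intros Z t s HZ; apply Hth, in_or_app; left; exact HZ.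
Qed.

Lemma invariant_Dec_app P P' S G sg X f ts ss Ys :
  Permutation P ((X, App f ts, App f ss) :: P') ->
  length ts = length ss -> length Ys = length ts -> NoDup Ys ->
  (forall Y, In Y Ys -> ~ In Y (aut_vars (P ++ S))) ->
  Forall2 (fun Y t => wsort t = Some (vsrt Y)) Ys ts ->
  invariant (mkState P S G sg) ->
  invariant (mkState (mk_auts Ys ts ss ++ P') S G
    (compose sg (single X (App f (map (fun Y => Susp [] Y) Ys))))).
Proof.
  intros HP Hts HYs ND HYfresh Hsorts Hinv.
  assert (HX : In (X, App f ts, App f ss) (P ++ S)).
  { apply in_or_app; left; apply (Permutation_in_cons_iff _ _ _ _ HP); left; reflexivity. }
  destruct (inv_wf _ Hinv _ _ _ HX) as (Wt & Ws & Bt & Bs); simpl in Wt, Ws.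
  destruct (sorts_match (map wsort ts) (fdom f)) eqn:Mt; [|discriminate].
  destruct (sorts_match (map wsort ss) (fdom f)) eqn:Ms; [|discriminate].
  apply sorts_match_map_Some in Mt, Ms.
  assert (Hsorts' : Forall2 (fun Y s => wsort s = Some (vsrt Y)) Ys ss).
  { apply (Forall2_map_congr wsort (fun Y => Some (vsrt Y)) _ ts); congruence. }
  apply (invariant_replace P P' S G sg X (App f ts) (App f ss)); auto.
  - apply mk_auts_functional; exact ND.
  - intros Z t s t' s' HZ HZ'; apply mk_auts_in in HZ as [HZ _].
    exact (HYfresh Z HZ (in_aut_vars _ _ _ _ HZ')).
  - intros Z t s HZ.
    destruct (mk_auts_Forall2 _ _ _ _ _ _ _ _ Hsorts Hsorts' HZ) as [St Ss].
    apply mk_auts_in in HZ as (_ & Ht & Hs).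
    repeat split; auto; intros x Hx; [apply Bt|apply Bs]; eapply atoms_App_in; eauto.
  - intros x Hx; simpl in Hx; apply in_concat in Hx as [l [Hl Hx]].
    apply in_map_iff in Hl as [u [<- Hu]].
    apply in_map_iff in Hu as [Y [<- _]]; contradiction.
  - intros b th Hth; simpl.
    replace (side b (App f ts) (App f ss)) with (App f (side b ts ss))
      by (destruct b; reflexivity).
    constructor; rewrite map_map; apply Forall2_map_l.
    apply Forall2_mk_auts_side; auto.
    intros Y t s HY; simpl; rewrite pact_nil; apply Hth; exact HY.
Qed.

Lemma invariant_Dec_atom P P' S G sg X a :
  Permutation P ((X, At a, At a) :: P') ->
  invariant (mkState P S G sg) ->
  invariant (mkState P' S G (compose sg (single X (At a)))).
Proof.
  intros HP Hinv.
  assert (HX : In (X, At a, At a) (P ++ S)).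
  { apply in_or_app; left; apply (Permutation_in_cons_iff _ _ _ _ HP); left; reflexivity. }
  destruct (inv_wf _ Hinv _ _ _ HX) as (_ & _ & Ba & _).
  apply (invariant_replace P P' S G sg X (At a) (At a) []); auto.
  - intros ? ? ? ? ? [].
  - intros ? ? ? [].
  - intros b th _; destruct b; constructor.
Qed.

Lemma invariant_Abs P P' S G sg X a t b s c Y :
  Permutation P ((X, Abs a t, Abs b s) :: P') ->
  abs_atom A nabla a t b s c ->
  ~ In Y (aut_vars (P ++ S)) ->
  wsort (pact [(c, a)] t) = Some (vsrt Y) ->
  invariant (mkState P S G sg) ->
  invariant (mkState ((Y, pact [(c, a)] t, pact [(c, b)] s) :: P') S G
    (compose sg (single X (Abs c (Susp [] Y))))).
Proof.
  intros HP (HcA & Hca & Hcb & Fa & Fb) HY HtY Hinv.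
  assert (HX : In (X, Abs a t, Abs b s) (P ++ S)).
  { apply in_or_app; left; apply (Permutation_in_cons_iff _ _ _ _ HP); left; reflexivity. }
  destruct (inv_wf _ Hinv _ _ _ HX) as (Wt & Ws & Bt & Bs); simpl in Wt, Ws.
  assert (Hok : forall d, asrt c = asrt d -> perm_ok [(c, d)] = true).
  { intros d E; unfold perm_ok; simpl; rewrite E, PeanoNat.Nat.eqb_refl; reflexivity. }
  assert (Hbased : forall d u, term_based A (Abs d u) -> term_based A (pact [(c, d)] u)).
  { intros d u Bu x Hx; apply atoms_pact in Hx as [<-|[<-|Hx]]; auto.
    - apply Bu; left; reflexivity.
    - apply Bu; right; exact Hx. }
  rewrite wsort_pact in HtY by auto.
  apply (invariant_replace P P' S G sg X (Abs a t) (Abs b s)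
           [(Y, pact [(c, a)] t, pact [(c, b)] s)]); auto.
  - intros Z ? ? ? ? [E1|[]] [E2|[]]; rewrite E1 in E2; injection E2; auto.
  - intros Z ? ? ? ? [E|[]] HZ; injection E as <- _ _.
    exact (HY (in_aut_vars _ _ _ _ HZ)).
  - intros Z ? ? [E|[]]; injection E as <- <- <-.
    unfold wf_aut; rewrite !wsort_pact by auto; repeat split; auto.
    destruct (wsort t), (wsort s); try discriminate; congruence.
  - intros x [<-|[]]; exact HcA.
  - intros b0 th Hth; simpl; rewrite pact_nil.
    destruct b0; apply aeq_Abs_rename; auto; exact (Hth Y _ _ (in_eq _ _)).
Qed.

Lemma invariant_Sol P P' S G G' sg X t s :
  Permutation P ((X, t, s) :: P') ->
  (forall a Z, In (a, Z) G' <->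
     Z = X /\ In a A /\ fresh nabla a t /\ fresh nabla a s) ->
  invariant (mkState P S G sg) ->
  invariant (mkState P' (S ++ [(X, t, s)]) (G ++ G') sg).
Proof.
  intros HP HG' [HF Hwf HG HB HS]; simpl in *.
  assert (HPS : Permutation (P ++ S) (P' ++ S ++ [(X, t, s)])).
  { rewrite app_assoc; eapply perm_trans;
      [apply (Permutation_app_tail S HP)|apply Permutation_cons_append]. }
  constructor; simpl.
  - apply (functional_incl (P ++ S)); auto.
    intros e; apply Permutation_in, Permutation_sym, HPS.
  - intros Z t' s' H; apply Hwf, (Permutation_in _ (Permutation_sym HPS)), H.
  - intros a Z H; apply in_app_or in H as [H|H].
    + destruct (HG a Z H) as (Ha & t' & s' & HZ & Ft & Fs).
      split; auto; exists t', s'; split; auto; apply in_or_app; left; exact HZ.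
    + apply HG' in H as (-> & Ha & Ft & Fs).
      split; auto; exists t, s; split; auto; apply in_or_app; right; left; reflexivity.
  - exact HB.
  - intros b; apply (sound_incl b (P ++ S)); auto.
    intros e; apply Permutation_in, HPS.
Qed.

Lemma invariant_Mer P S S' G G' sg X t1 s1 Y t2 s2 pi :
  Permutation S ((X, t1, s1) :: (Y, t2, s2) :: S') ->
  incl (perm_atoms pi) (atoms t1 ++ atoms s1 ++ atoms t2 ++ atoms s2) ->
  aeq nabla (pact pi t1) t2 -> aeq nabla (pact pi s1) s2 ->
  ctx_subst G (single Y (Susp pi X)) = Some G' ->
  invariant (mkState P S G sg) ->
  invariant (mkState P ((X, t1, s1) :: S') G' (compose sg (single Y (Susp pi X)))).
Proof.
  intros HS Hpi Ht Hs HG' [HF Hwf HG HB Hsound]; simpl in *.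
  assert (HinS : forall e, In e S <-> (X, t1, s1) = e \/ (Y, t2, s2) = e \/ In e S').
  { intros e; rewrite (Permutation_in_cons_iff _ _ _ _ HS); reflexivity. }
  assert (Hsub : incl (P ++ (X, t1, s1) :: S') (P ++ S)).
  { intros e He; apply in_app_or in He as [He|He]; apply in_or_app; auto.
    right; apply HinS; destruct He; auto. }
  assert (HX : In (X, t1, s1) (P ++ S)) by (apply in_or_app; right; apply HinS; auto).
  assert (HY : In (Y, t2, s2) (P ++ S)) by (apply in_or_app; right; apply HinS; auto).
  assert (HpiA : incl (perm_atoms pi) A).
  { destruct (Hwf _ _ _ HX) as (_ & _ & B1 & B2), (Hwf _ _ _ HY) as (_ & _ & B3 & B4).
    intros x Hx; apply Hpi in Hx; repeat (apply in_app_or in Hx as [Hx|Hx]; auto). }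
  assert (Hkeep : forall Z t s,
             In (Z, t, s) S -> Z <> Y -> In (Z, t, s) ((X, t1, s1) :: S')).
  { intros Z t s HZ HZY; apply HinS in HZ as [E|[E|HZ]]; [left; exact E| |right; exact HZ].
    injection E; intros; congruence. }
  constructor; simpl.
  - exact (functional_incl _ _ Hsub HF).
  - intros Z t s H; apply Hwf, Hsub, H.
  - intros a' Z' H.
    destruct (ctx_subst_single_Susp_in _ _ _ _ _ _ _ HG' H) as [(a & HaY & -> & ->)|[HaZ HZY]].
    + destruct (HG a Y HaY) as (Ha & t & s & HYS & Ft & Fs).
      destruct (HF Y t s t2 s2 (in_or_app _ _ _ (or_intror HYS)) HY) as [-> ->].
      split; [apply patom_pinv_in; auto|].
      exists t1, s1; split; [left; reflexivity|].
      split; eapply fresh_pinv_aeq; eassumption.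
    + destruct (HG a' Z' HaZ) as (Ha & t & s & HZS & Ft & Fs).
      split; auto; exists t, s; split; [apply Hkeep|split]; assumption.
  - intros x Hx; apply atoms_apply_single, in_app_or in Hx as [Hx|Hx]; auto.
  - intros b; apply (sound_compose b (P ++ S)) with t2 s2; auto.
    + intros Z t s HZ HZY; apply in_app_or in HZ as [HZ|HZ]; apply in_or_app; auto.
    + intros th Hth; simpl; eapply aeq_trans.
      * apply aeq_pact, (Hth X t1 s1), in_or_app; right; left; reflexivity.
      * destruct b; assumption.
Qed.

Lemma invariant_step U st st' :
  step A nabla U X0 st st' -> invariant st -> invariant st'.
Proof.
  intros Hstep; destruct Hstep as
    [P P' S G sg X f ts ss Ys HP Hts HYs ND Hfresh Hsorts
    |P P' S G sg X a HP
    |P P' S G sg X a t b s c Y HP Hc Hfresh HY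
    |P P' S G G' sg X t s HP _ HG'
    |P S S' G G' sg X t1 s1 Y t2 s2 pi HS _ Hpi Ht Hs HG'].
  - apply invariant_Dec_app; auto.
    intros Y HY; rewrite Forall_forall in Hfresh; apply (Hfresh Y HY).
  - apply invariant_Dec_atom; auto.
  - apply invariant_Abs; auto; apply Hfresh.
  - apply invariant_Sol; auto.
  - eapply invariant_Mer; eauto.
Qed.

Lemma invariant_clos_trans U st st' :
  clos_trans state (step A nabla U X0) st st' -> invariant st -> invariant st'.
Proof. intros H; induction H; eauto using invariant_step. Qed.

Lemma invariant_initial :
  wsort t0 = Some (vsrt X0) -> wsort s0 = Some (vsrt X0) ->
  term_based A t0 -> term_based A s0 ->
  invariant (mkState [(X0, t0, s0)] [] [] id_subst).
Proof.
  intros Wt Ws Bt Bs; constructor; simpl.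
  - intros Z t s t' s' [E1|[]] [E2|[]]; rewrite E1 in E2; injection E2; auto.
  - intros Z t s [E|[]]; injection E as <- <- <-; repeat split; assumption.
  - intros a Z [].
  - intros x [].
  - intros b th Hth; simpl; rewrite pact_nil; exact (Hth X0 t0 s0 (in_eq _ _)).
Qed.

Lemma invariant_final_preceq S G sg b :
  invariant (mkState [] S G sg) -> preceq G (sg X0) nabla (side b t0 s0).
Proof.
  intros [HF Hwf HG _ HS]; simpl in *.
  exists (aut_solution b S); split; [|split; [|split]].
  - intros Z; unfold aut_solution; destruct find as [[[Z' t] s]|] eqn:E; [|reflexivity].
    apply find_some in E as [HZ E]; simpl in E.
    destruct var_eq_dec as [<-|]; [|discriminate].
    destruct (Hwf _ _ _ HZ) as (Wt & Ws & _); destruct b; assumption.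
  - intros a Z H; destruct (HG a Z H) as (_ & t & s & HZ & Ft & Fs).
    rewrite (aut_solution_in b S Z t s HF HZ).
    apply (fresh_not_free nabla); destruct b; assumption.
  - unfold ctx_subst; apply FC_fresh; intros a u H.
    apply in_map_iff in H as [[a0 Z] [E H]]; simpl in E; injection E as <- <-.
    destruct (HG a0 Z H) as (_ & t & s & HZ & Ft & Fs).
    rewrite (aut_solution_in b S Z t s HF HZ); destruct b; assumption.
  - apply HS; intros Z t s HZ; rewrite (aut_solution_in b S Z t s HF HZ).
    apply aeq_refl.
Qed.

End Invariant.

Theorem theorem3 :
  forall (A : list Atom) (nabla : fctx) (t s : term) (srt : sort) (X : Var)
         (S : list aut) (Gamma : fctx) (sigma : subst),
    wsort t = Some srt -> wsort s = Some srt ->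
    term_based A t -> term_based A s -> ctx_based A nabla ->
    vsrt X = srt ->
    ~ In X (tvars t ++ tvars s ++ ctx_vars nabla) ->
    clos_trans state
      (step A nabla (X :: tvars t ++ tvars s ++ ctx_vars nabla) X)
      (mkState [(X, t, s)] [] [] id_subst)
      (mkState [] S Gamma sigma) ->
    A_based_generalization A Gamma (sigma X) nabla t nabla s.
Proof.
  intros A nabla t s srt X S Gamma sigma Ht Hs Bt Bs _ <- _ Hrun.
  assert (Hinv : invariant A nabla t s X (mkState [] S Gamma sigma)).
  { eapply invariant_clos_trans; [exact Hrun|].
    apply invariant_initial; assumption. }
  split; [|split; [|split]].
  - intros a Z H; apply (inv_ctx _ _ _ _ _ _ Hinv a Z H).
  - exact (inv_based _ _ _ _ _ _ Hinv).
  - exact (invariant_final_preceq _ _ _ _ _ _ _ _ true Hinv).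
  - exact (invariant_final_preceq _ _ _ _ _ _ _ _ false Hinv).
Qed.
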